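(* Let $q$ be a power of a prime $p\ge 5$ and let $a\in\mathbb F_q$ be such that $f=X^6+X^5+a\in\mathbb F_q[X]$ is irreducible. If $\prod_{m\in\{2,3,6\}}\theta_{6,m}(1,0,0,0,0,a)\ne 0$ (evaluated in $\mathbb F_q$), then $f$ is normal over $\mathbb F_q$.
   Context: A monic irreducible polynomial of degree $n$ over $\mathbb F_q$ is called normal if its roots are linearly independent over $\mathbb F_q$. Let $\epsilon_m=e^{2\pi\sqrt{-1}/m}$ and $\Psi_m(X_0,\dots,X_{m-1})=\prod_{i\in(\mathbb Z/m\mathbb Z)^\times}\bigl(\sum_{j\in\mathbb Z/m\mathbb Z}\epsilon_m^{ij}X_j\bigr)\in\mathbb Z[X_0,\dots,X_{m-1}]$. For $m\mid n$ put $Y_{n,i}=\sum_{j=0}^{n/m-1}X_{i+mj}$ for $0\le i\le m-1$. Let the symmetric group $S_n$ act on $\mathbb Z[X_0,\dots,X_{n-1}]$ by permuting the indeterminates, and define $\Theta_{n,m}=\prod_\phi\phi\bigl(\Psi_m(Y_{n,0},\dots,Y_{n,m-1})\bigr)$, where $\phi$ runs over a left transversal of the stabilizer of $\Psi_m(Y_{n,0},\dots,Y_{n,m-1})$ in $S_n$; this is a symmetric polynomial in $\mathbb Z[X_0,\dots,X_{n-1}]$. Let $\theta_{n,m}\in\mathbb Z[s_1,\dots,s_n]$ be its symmetric reduction, i.e. the unique polynomial with $\Theta_{n,m}(X_0,\dots,X_{n-1})=\theta_{n,m}(s_1,\dots,s_n)$, where $s_i$ is the $i$-th elementary symmetric polynomial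 in $X_0,\dots,X_{n-1}$. Evaluation of $\theta_{n,m}$ at elements of $\mathbb F_q$ is done after reducing its integer coefficients modulo $p$. Here $n=6$. *)

From HB Require Import structures.
From mathcomp Require Import all_boot all_order all_algebra all_fingroup all_field.
From mathcomp Require Import mpoly.
Set Implicit Arguments. Unset Strict Implicit. Unset Printing Implicit Defensive.
Import GRing.Theory.
Local Open Scope ring_scope.

(* A fixed primitive m-th root of unity in algC (m > 0).  Psi_m does not
   depend on which primitive root is chosen. *)
Definition eps (m : nat) : algC :=
  if m is k.+1 then sval (C_prim_root_exists (ltn0Sn k)) else 1.

Definition Psi (m : nat) : {mpoly algC[m]} :=
  \prod_(i < m | coprime i m) \sum_(j < m) (eps m ^+ (i * j)) *: 'X_j.

Definition Yv (n m i : nat) : {mpoly algC[n]} :=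
  \sum_(j < n %/ m)
     (if (insub (i + m * j)%N : option 'I_n) is Some k then 'X_k else 0).

Definition PsiY (n m : nat) : {mpoly algC[n]} :=
  Psi m \mPo [tuple Yv n m i | i < m].

(* Theta_{n,m}: product of the distinct images of PsiY under S_n,
   i.e. product of phi(PsiY) over a left transversal of its stabilizer. *)
Definition Theta (n m : nat) : {mpoly algC[n]} :=
  \prod_(Q <- undup [seq msym s (PsiY n m) | s : 'S_n]) Q.

(* t is the symmetric reduction theta_{n,m} of Theta_{n,m}: an integer
   polynomial with t(s_1,...,s_n) = Theta_{n,m}. *)
Definition is_theta (n m : nat) (t : {mpoly int[n]}) : Prop :=
  map_mpoly (fun z : int => z%:~R : algC) t \mPo [tuple mesym n algC i.+1 | i < n]
  = Theta n m.
Arguments is_theta : clear implicits.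

Definition evalZ (F : nzRingType) (n : nat) (t : {mpoly int[n]}) (v : 'I_n -> F) : F :=
  (map_mpoly (fun z : int => z%:~R : F) t).@[v].

Definition normal_poly (F : fieldType) (f : {poly F}) : Prop :=
  [/\ f \is monic, irreducible_poly f &
   forall (L : fieldExtType F) (rs : seq L),
     map_poly (in_alg L) f = \prod_(x <- rs) ('X - x%:P) -> free rs].

From HB Require Import structures.
From mathcomp Require Import all_boot all_order all_algebra all_fingroup all_field.
From mathcomp Require Import mpoly.
From mathcomp Require Import ring.
Set Implicit Arguments.
Unset Strict Implicit.
Unset Printing Implicit Defensive.
Import GRing.Theory.
Local Open Scope ring_scope.

(* Let x be a root of f in an extension L of F = F_q and put y_k = x^(q^k).  As f is
   irreducible of degree 6, y_0, ..., y_5 are its six distinct roots and y_6 = y_0.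
   Applying Frobenius to a relation sum_i c_i y_i = 0 with c_i in F gives the circulant
   system sum_i c_i y_(i+s) = 0, whose determinant is the product of the sums
   sum_i w^i y_i over the sixth roots of unity w: these are sum_i y_i = -1 and the values
   of Psi_m(Y_(6,0), ..., Y_(6,m-1)) at the y_i for m = 2, 3, 6.  The -y_i are the roots
   of f(-X) = X^6 - X^5 + a, whose elementary symmetric functions are (1,0,0,0,0,a); so
   theta_(6,m)(1,0,0,0,0,a) is the product of the conjugates of Psi_m(Y) at the -y_i,
   Psi_m(Y) itself among them, and its non-vanishing makes the circulant system
   nondegenerate (2 != 0 is used to split it into two 3 x 3 circulants). *)

Definition frobq (F : finFieldType) (L : fieldExtType F) (k : nat) (y : L) : L :=
  y ^+ (#|F| ^ k)%N.
Arguments frobq {F L} k y.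

Section FrobeniusPower.
Variables (F : finFieldType) (L : fieldExtType F).
Local Notation q := #|F|.

Lemma pnat_card_pchar k : [pchar L].-nat (q ^ k)%N.
Proof.
have [p p_pr pF] := finPcharP F.
rewrite (eq_pnat _ (pcharf_eq (p := p) _)); last by rewrite pchar_lalg.
by rewrite (card_pprimeChar pF) -expnM pnatX pnat_id.
Qed.

Fact frobq_is_nmod_morphism k : nmod_morphism (@frobq F L k).
Proof.
split=> [|y z]; last exact: exprDn_pchar (pnat_card_pchar k).
by rewrite /frobq expr0n expn_eq0 (gtn_eqF (ltnW (finNzRing_gt1 F))).
Qed.

Fact frobq_is_monoid_morphism k : monoid_morphism (@frobq F L k).
Proof. by split=> [|y z]; rewrite /frobq ?expr1n ?exprMn. Qed.

End FrobeniusPower.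

HB.instance Definition _ (F : finFieldType) (L : fieldExtType F) k :=
  GRing.isNmodMorphism.Build L L (frobq k) (@frobq_is_nmod_morphism F L k).
HB.instance Definition _ (F : finFieldType) (L : fieldExtType F) k :=
  GRing.isMonoidMorphism.Build L L (frobq k) (@frobq_is_monoid_morphism F L k).

Section FrobeniusOrbit.
Variables (F : finFieldType) (L : fieldExtType F).

Lemma frobq_alg k a : frobq k (a%:A : L) = a%:A.
Proof.
rewrite /frobq -in_algE -rmorphXn; congr (in_alg L _).
by elim: k => [|k IHk]; rewrite ?expr1 // expnSr exprM IHk expf_card.
Qed.

Lemma frobqZ k a (y : L) : frobq k (a *: y) = a *: frobq k y.
Proof. by rewrite -[a *: y]mulr_algl -[a *: frobq k y]mulr_algl rmorphM /= frobq_alg. Qed.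

Lemma frobqD j k (y : L) : frobq j (frobq k y) = frobq (k + j) y.
Proof. by rewrite /frobq -exprM expnD. Qed.

Local Notation "p ^%:A" := (map_poly (in_alg L) p) (format "p ^%:A").

Lemma map_poly_frobq k (g : {poly F}) : map_poly (frobq k) g^%:A = g^%:A.
Proof. by rewrite -map_poly_comp; apply: eq_map_poly => a /=; rewrite frobq_alg. Qed.

Lemma root_frobq k (g : {poly F}) y : root g^%:A y -> root g^%:A (frobq k y).
Proof. by move=> /rootP gy0; rewrite rootE -(map_poly_frobq k) horner_map gy0 rmorph0. Qed.

Variables (n : nat) (f : {poly F}) (x : L).
Hypotheses (size_f : size f = n.+1) (f_irr : irreducible_poly f) (fx0 : root f^%:A x).

Lemma small_root_eq0 (g : {poly F}) : (size g < size f)%N -> root g^%:A x -> g = 0.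
Proof.
move=> lt_gf gx0; apply/eqP; apply: contraTT gx0 => g_nz.
have f_g : coprimep f g.
  apply: contraT => /(f_irr.2 _) /(_ (dvdp_gcdl f g)) gcd_f.
  have /(dvdp_leq g_nz) : f %| g by rewrite -(eqp_dvdl _ gcd_f) dvdp_gcdr.
  by rewrite leqNgt lt_gf.
by rewrite /root (coprimep_root _ fx0) // coprimep_map.
Qed.

(* Otherwise the q^n values g(x), size g <= n, would all be roots of X^(q^d) - X. *)
Lemma frobq_fixed_lt d : (0 < d < n)%N -> frobq d x != x.
Proof.
case/andP=> d_gt0 lt_dn; apply/eqP => xd.
pose ev (g : {poly_n F}) := (val g)^%:A.[x].
have ev_inj : injective ev.
  move=> g h ev_gh; apply/val_inj/eqP; rewrite -subr_eq0; apply/eqP.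
  apply: small_root_eq0; first by rewrite size_f ltnS (size_npoly (g - h)).
  by rewrite /root rmorphB hornerD hornerN -/(ev g) -/(ev h) ev_gh subrr.
pose Q := (#|F| ^ d)%N.
have q_gt1 := finNzRing_gt1 F.
have size_XQ : size ('X^Q - 'X : {poly L}) = Q.+1.
  have Q_gt1 : (1 < Q)%N by rewrite -[1%N](expn0 #|F|) ltn_exp2l.
  by rewrite size_polyDl ?size_polyXn // size_polyN size_polyX.
have XQ_nz : ('X^Q - 'X : {poly L}) != 0 by rewrite -size_poly_eq0 size_XQ.
have ev_fixed : all (root ('X^Q - 'X)) [seq ev g | g <- enum {poly_n F}].
  apply/allP => _ /mapP[g _ ->]; rewrite rootE !hornerE subr_eq0; apply/eqP.
  by rewrite -[_ ^+ Q]/(frobq d (ev g)) /ev -horner_map map_poly_frobq /= xd.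
have ev_uniq : uniq [seq ev g | g <- enum {poly_n F}] by rewrite map_inj_uniq ?enum_uniq.
have := max_poly_roots XQ_nz ev_fixed ev_uniq.
by rewrite size_map -cardE card_npoly size_XQ ltnS leqNgt ltn_exp2l // lt_dn.
Qed.

Lemma frobq_subn_fixed i j (y : L) :
  (i <= j)%N -> frobq i y = frobq j y -> frobq (j - i) y = y.
Proof. by move=> le_ij; rewrite -(subnK le_ij) -frobqD addnK => /fmorph_inj. Qed.

Lemma frobq_inj_lt i j : (i < n)%N -> (j < n)%N -> frobq i x = frobq j x -> i = j.
Proof.
wlog le_ij : i j / (i <= j)%N => [hw lt_in lt_jn eq_ij | _ lt_jn].
  by case/orP: (leq_total i j) => /hw; [apply | move=> h; rewrite h].
move/(frobq_subn_fixed le_ij)/eqP; apply: contraTeq => ne_ij.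
rewrite frobq_fixed_lt // subn_gt0 ltn_neqAle ne_ij le_ij.
by rewrite (leq_ltn_trans (leq_subr _ _)).
Qed.

Lemma frobq_period : frobq n x = x.
Proof.
have fL_nz : f^%:A != 0 by rewrite -size_poly_eq0 size_map_poly size_f.
have : ~~ uniq [seq frobq i x | i <- iota 0 n.+1].
  apply: contraTN isT => orbit_uniq.
  have := max_poly_roots fL_nz _ orbit_uniq.
  rewrite size_map_poly size_f size_map size_iota ltnn; apply.
  by apply/allP => _ /mapP[i _ ->]; apply: root_frobq.
case/(uniqPn x) => i [j []]; rewrite size_map size_iota ltnS => lt_ij le_jn.
rewrite !(nth_map 0%N) ?nth_iota ?size_iota ?(ltn_trans lt_ij) // !add0n.
move/(frobq_subn_fixed (ltnW lt_ij)) => fixed.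
have [lt_n | ge_n] := ltnP (j - i) n.
  by move: (@frobq_fixed_lt (j - i)); rewrite fixed eqxx subn_gt0 lt_ij lt_n => /(_ isT).
suff <- : (j - i)%N = n by [].
by apply/eqP; rewrite eqn_leq ge_n (leq_trans (leq_subr i j)).
Qed.

Definition frobq_orbit := [tuple frobq i x | i < n].

Lemma frobq_orbit_uniq : uniq frobq_orbit.
Proof.
rewrite map_inj_uniq ?enum_uniq // => i j.
by move/(frobq_inj_lt (ltn_ord i) (ltn_ord j))/val_inj.
Qed.

Lemma prod_frobq_orbit : f \is monic -> f^%:A = \prod_(r <- frobq_orbit) ('X - r%:P).
Proof.
move=> f_monic; have lead_fL : lead_coef f^%:A = 1.
  by rewrite lead_coef_map (monicP f_monic) rmorph1.
rewrite [LHS](@all_roots_prod_XsubC _ _ frobq_orbit) ?lead_fL ?scale1r //.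
- by rewrite size_map_poly size_f size_tuple.
- by apply/allP => _ /mapP[i _ ->]; apply: root_frobq.
- by rewrite uniq_rootsE frobq_orbit_uniq.
Qed.

End FrobeniusOrbit.

Section CirculantForms.
Variable R : comNzRingType.
Implicit Types (u a b c : R) (y : nat -> R).

(* [psiy m y] is Psi_m(Y_(6,0), ..., Y_(6,m-1)) at X_i = y i, written out;
   [norm3 a b c] = (a + w b + w^2 c) (a + w^2 b + w c) for w a primitive cube root of 1. *)
Definition norm3 a b c := a ^+ 2 + b ^+ 2 + c ^+ 2 - a * b - a * c - b * c.

Definition psiy2 y := y 0%N - y 1%N + y 2%N - y 3%N + y 4%N - y 5%N.
Definition psiy3 y := norm3 (y 0%N + y 3%N) (y 1%N + y 4%N) (y 2%N + y 5%N).
Definition psiy6 y := norm3 (y 0%N - y 3%N) (y 4%N - y 1%N) (y 2%N - y 5%N).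

Lemma norm3_root3 u a b c : u ^+ 2 + u + 1 = 0 ->
  (a + u * b + u ^+ 2 * c) * (a + u ^+ 2 * b + (u ^+ 2) ^+ 2 * c) = norm3 a b c.
Proof.
move=> u_root; apply/eqP; rewrite -subr_eq0; apply/eqP.
transitivity ((u ^+ 2 + u + 1) * ((b ^+ 2 + c ^+ 2 * (u ^+ 3 + 1)) * (u - 1)
  + a * b + a * c * (u ^+ 2 - u + 1) + b * c * (u ^+ 3 - u + 1))).
  by rewrite /norm3; ring.
by rewrite u_root mul0r.
Qed.

Lemma dft2E u y : u = -1 -> \sum_(j < 2) (u ^+ 1) ^+ j * y j = y 0%N - y 1%N.
Proof. by move->; rewrite !big_ord_recr big_ord0 /=; ring. Qed.

Lemma dft3_norm u y : u ^+ 2 + u + 1 = 0 ->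
  (\sum_(j < 3) (u ^+ 1) ^+ j * y j) * (\sum_(j < 3) (u ^+ 2) ^+ j * y j)
  = norm3 (y 0%N) (y 1%N) (y 2%N).
Proof.
move=> u_root; rewrite -(norm3_root3 (y 0%N) (y 1%N) (y 2%N) u_root).
by rewrite !big_ord_recr !big_ord0 /=; ring.
Qed.

Lemma dft6E u y : u ^+ 3 = -1 -> \sum_(j < 6) u ^+ j * y j =
  (y 0%N - y 3%N) + - u * (y 4%N - y 1%N) + (- u) ^+ 2 * (y 2%N - y 5%N).
Proof.
move=> u3; rewrite !big_ord_recr big_ord0 /=; apply/eqP; rewrite -subr_eq0; apply/eqP.
transitivity ((u ^+ 3 + 1) * (y 3%N + u * y 4%N + u ^+ 2 * y 5%N)); first by ring.
by rewrite u3 addNr mul0r.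
Qed.

Lemma dft6_norm u y : u ^+ 3 = -1 -> (- u) ^+ 2 + (- u) + 1 = 0 ->
  (\sum_(j < 6) (u ^+ 1) ^+ j * y j) * (\sum_(j < 6) (u ^+ 5) ^+ j * y j) = psiy6 y.
Proof.
move=> u3 u_root; have u5_3 : (u ^+ 5) ^+ 3 = -1 by rewrite exprAC u3; ring.
have u5 : - u ^+ 5 = (- u) ^+ 2 by rewrite sqrrN -[5%N]/(3 + 2)%N exprD u3 mulN1r opprK.
by rewrite expr1 !dft6E // u5 norm3_root3.
Qed.

Lemma psiy2N y : psiy2 (fun k => - y k) = - psiy2 y.
Proof. by rewrite /psiy2; ring. Qed.

Lemma psiy3N y : psiy3 (fun k => - y k) = psiy3 y.
Proof. by rewrite /psiy3 /norm3; ring. Qed.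

Lemma psiy6N y : psiy6 (fun k => - y k) = psiy6 y.
Proof. by rewrite /psiy6 /norm3; ring. Qed.

End CirculantForms.

Section RmorphCirculantForms.
Variables (R S : comNzRingType) (f : {rmorphism R -> S}) (y : nat -> R) (z : nat -> S).
Hypothesis fyz : forall k, (k < 6)%N -> f (y k) = z k.

Lemma rmorph_psiy2 : f (psiy2 y) = psiy2 z.
Proof. by rewrite /psiy2 !(rmorphB, rmorphD) !fyz. Qed.

Lemma rmorph_psiy3 : f (psiy3 y) = psiy3 z.
Proof. by rewrite /psiy3 /norm3 !(rmorphB, rmorphD, rmorphM, rmorphXn) !fyz. Qed.

Lemma rmorph_psiy6 : f (psiy6 y) = psiy6 z.
Proof. by rewrite /psiy6 /norm3 !(rmorphB, rmorphD, rmorphM, rmorphXn) !fyz. Qed.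

End RmorphCirculantForms.

Section Circulant.
Variable L : fieldType.

Lemma circulant3_eq0 (a0 a1 a2 d0 d1 d2 : L) :
  (a0 + a1 + a2) * norm3 a0 a1 a2 != 0 ->
  d0 * a0 + d1 * a1 + d2 * a2 = 0 ->
  d0 * a1 + d1 * a2 + d2 * a0 = 0 ->
  d0 * a2 + d1 * a0 + d2 * a1 = 0 ->
  [/\ d0 = 0, d1 = 0 & d2 = 0].
Proof.
move=> det_nz e0 e1 e2.
pose A := a1 * a2 - a0 ^+ 2; pose B := a0 * a2 - a1 ^+ 2; pose C := a0 * a1 - a2 ^+ 2.
have cramer d : (a0 + a1 + a2) * norm3 a0 a1 a2 * d = 0 -> d = 0.
  by move/eqP; rewrite mulf_eq0 (negbTE det_nz) => /eqP.
split; apply: cramer.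
- transitivity (- (A * (d0 * a0 + d1 * a1 + d2 * a2) + B * (d0 * a1 + d1 * a2 + d2 * a0)
    + C * (d0 * a2 + d1 * a0 + d2 * a1))); first by rewrite /A /B /C /norm3; ring.
  by rewrite e0 e1 e2; ring.
- transitivity (- (B * (d0 * a0 + d1 * a1 + d2 * a2) + C * (d0 * a1 + d1 * a2 + d2 * a0)
    + A * (d0 * a2 + d1 * a0 + d2 * a1))); first by rewrite /A /B /C /norm3; ring.
  by rewrite e0 e1 e2; ring.
- transitivity (- (C * (d0 * a0 + d1 * a1 + d2 * a2) + A * (d0 * a1 + d1 * a2 + d2 * a0)
    + B * (d0 * a2 + d1 * a0 + d2 * a1))); first by rewrite /A /B /C /norm3; ring.
  by rewrite e0 e1 e2; ring.
Qed.

(* Sums and differences of the equations for s and s + 3 are 3 x 3 circulant systems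
   in the c_i + c_(i+3) and in the c_i - c_(i+3). *)
Lemma circulant6_eq0 (y c : nat -> L) :
  2 != 0 :> L -> (forall k, y (k + 6)%N = y k) ->
  \sum_(i < 6) y i != 0 -> psiy2 y != 0 -> psiy3 y != 0 -> psiy6 y != 0 ->
  (forall s, \sum_(i < 6) c i * y (i + s)%N = 0) ->
  forall i, (i < 6)%N -> c i = 0.
Proof.
move=> two_nz y_per sum_nz psi2_nz psi3_nz psi6_nz c_circ.
move: (c_circ 0%N) (c_circ 1%N) (c_circ 2%N) (c_circ 3%N) (c_circ 4%N) (c_circ 5%N).
rewrite !big_ord_recr !big_ord0 /= !add0r !addnE /=.
rewrite (y_per 0%N) (y_per 1%N) (y_per 2%N) (y_per 3%N) (y_per 4%N).
move=> e0 e1 e2 e3 e4 e5.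
have [p0 p1 p2] : [/\ c 0%N + c 3%N = 0, c 1%N + c 4%N = 0 & c 2%N + c 5%N = 0].
  apply: (@circulant3_eq0 (y 0%N + y 3%N) (y 1%N + y 4%N) (y 2%N + y 5%N)).
  - rewrite mulf_neq0 //; move: sum_nz; rewrite !big_ord_recr big_ord0 /=.
    by congr (~~ (_ == 0)); ring.
  - by rewrite -[RHS](addr0 0) -{1}e0 -e3; ring.
  - by rewrite -[RHS](addr0 0) -{1}e1 -e4; ring.
  - by rewrite -[RHS](addr0 0) -{1}e2 -e5; ring.
have [m0 m1 m2] : [/\ c 0%N - c 3%N = 0, c 4%N - c 1%N = 0 & c 2%N - c 5%N = 0].
  apply: (@circulant3_eq0 (y 0%N - y 3%N) (y 4%N - y 1%N) (y 2%N - y 5%N)).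
  - suff -> : y 0%N - y 3%N + (y 4%N - y 1%N) + (y 2%N - y 5%N) = psiy2 y.
      by rewrite mulf_neq0.
    by rewrite /psiy2; ring.
  - by rewrite -[RHS](subr0 0) -{1}e0 -e3; ring.
  - by rewrite -[RHS](subr0 0) -{1}e4 -e1; ring.
  - by rewrite -[RHS](subr0 0) -{1}e2 -e5; ring.
have halves (u v : L) : u + v = 0 -> u - v = 0 -> u = 0 /\ v = 0.
  move=> uv_p uv_m; have : 2 * u = (u + v) + (u - v) by ring.
  rewrite uv_p uv_m addr0 => /eqP; rewrite mulf_eq0 (negbTE two_nz) => /eqP u0.
  by split=> //; move: uv_p; rewrite u0 add0r.
have [c0 c3] := halves _ _ p0 m0.
have [c4 c1] := halves _ _ (etrans (addrC _ _) p1) m1.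
have [c2 c5] := halves _ _ p2 m2.
by case=> [|[|[|[|[|[|//]]]]]].
Qed.
End Circulant.

Section PrimitiveRoots.
Variable R : idomainType.
Implicit Type u : R.

Lemma prim_root_expr_half n u : (0 < n)%N -> (n.*2).-primitive_root u -> u ^+ n = -1.
Proof.
move=> n_gt0 pu; have /eqP := prim_expr_order pu.
rewrite -muln2 exprM sqrf_eq1 => /orP[/eqP un1 | /eqP //].
have := eq_prim_root_expr pu n 0; rewrite un1 expr0 eqxx mod0n modn_small //.
by rewrite eqn0Ngt n_gt0.
by rewrite -addnn -{1}[n]addn0 ltn_add2l.
Qed.

Lemma prim_root3_eq0 u : 3.-primitive_root u -> u ^+ 2 + u + 1 = 0.
Proof.
move=> pu; have u_neq1 : u != 1 by rewrite -[u]expr1 -(expr0 u) (eq_prim_root_expr pu).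
have /eqP := prim_expr_order pu; rewrite -subr_eq0.
have -> : u ^+ 3 - 1 = (u - 1) * (u ^+ 2 + u + 1) by ring.
by rewrite mulf_eq0 subr_eq0 (negbTE u_neq1) => /eqP.
Qed.

Lemma prim_root6_eq0 u : 6.-primitive_root u -> (- u) ^+ 2 + (- u) + 1 = 0.
Proof.
move=> pu; have u3 := prim_root_expr_half (isT : (0 < 3)%N) pu.
have -> : - u = u ^+ 4 by rewrite -[4%N]/(3 + 1)%N exprD u3 mulN1r expr1.
by apply: prim_root3_eq0; exact: (exp_prim_root pu 4).
Qed.

End PrimitiveRoots.

Definition var6 (R : nzRingType) (i : nat) : {mpoly R[6]} := 'X_(inord i).

Lemma map_var6 (R S : nzRingType) (f : {rmorphism R -> S}) k :
  map_mpoly f (var6 R k) = var6 S k.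
Proof. exact: map_mpolyX. Qed.

Lemma Yv_X n m i : (i < m)%N ->
  Yv n.+1 m i = \sum_(j < n.+1 %/ m) 'X_(inord (i + m * j)).
Proof.
move=> lt_im; apply: eq_bigr => j _.
have lt_k : (i + m * j < n.+1)%N.
  have := ltn_ord j; rewrite leq_divRL ?(leq_ltn_trans (leq0n i) lt_im) //.
  by apply: leq_trans; rewrite mulSn mulnC ltn_add2r.
case: insubP => [k _ val_k | ]; last by rewrite lt_k.
by congr (mpolyX _ U_(_)); apply: val_inj; rewrite /= inordK.
Qed.

Lemma PsiYE m : PsiY 6 m = \prod_(0 <= i < m | coprime i m)
  \sum_(j < m) ((eps m)%:MP ^+ i) ^+ j * Yv 6 m j.
Proof.
rewrite /PsiY /Psi rmorph_prod big_mkord; apply: eq_bigr => i _.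
rewrite raddf_sum /=; apply: eq_bigr => j _.
by rewrite comp_mpolyZ comp_mpolyXU -tnth_nth tnth_mktuple -mul_mpolyC rmorphXn exprM.
Qed.

Lemma eps_prim m : (0 < m)%N -> m.-primitive_root (eps m).
Proof. by case: m => // m _; exact: (svalP (C_prim_root_exists _)). Qed.

Lemma PsiY_6_6 : PsiY 6 6 = map_mpoly intr (psiy6 (var6 int)).
Proof.
transitivity (psiy6 (var6 algC)); last by rewrite (rmorph_psiy6 (fun k _ => map_var6 _ k)).
have eps6 := eps_prim (isT : (0 < 6)%N).
have /(congr1 (@mpolyC 6 _)) := prim_root_expr_half (n := 3) isT eps6.
rewrite rmorphXn rmorphN1 => z3.
have /(congr1 (@mpolyC 6 _)) := prim_root6_eq0 eps6.
rewrite !rmorphD rmorphXn rmorphN rmorph1 rmorph0 => z_root.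
rewrite PsiYE; set z := (eps 6)%:MP in z3 z_root *.
rewrite /index_iota /= !big_cons big_nil /= mulr1 dft6_norm //.
by rewrite /psiy6 !Yv_X // (_ : 6 %/ 6 = 1)%N // !big_ord1 !muln0 !addn0.
Qed.

Lemma PsiY_6_3 : PsiY 6 3 = map_mpoly intr (psiy3 (var6 int)).
Proof.
transitivity (psiy3 (var6 algC)); last by rewrite (rmorph_psiy3 (fun k _ => map_var6 _ k)).
have /(congr1 (@mpolyC 6 _)) := prim_root3_eq0 (eps_prim (isT : (0 < 3)%N)).
rewrite !rmorphD rmorphXn rmorph1 rmorph0 => z_root.
rewrite PsiYE; set z := (eps 3)%:MP in z_root *.
rewrite /index_iota /= !big_cons big_nil /= mulr1 dft3_norm //.
by rewrite !Yv_X // (_ : 6 %/ 3 = 2)%N // !big_ord_recr !big_ord0 /= !add0r !addnE !mulnE.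
Qed.

Lemma PsiY_6_2 : PsiY 6 2 = map_mpoly intr (psiy2 (var6 int)).
Proof.
transitivity (psiy2 (var6 algC)); last by rewrite (rmorph_psiy2 (fun k _ => map_var6 _ k)).
have := prim_root_expr_half (n := 1) isT (eps_prim (isT : (0 < 2)%N)).
move=> /(congr1 (@mpolyC 6 _)); rewrite expr1 rmorphN1 => z_eq.
rewrite PsiYE; set z := (eps 2)%:MP in z_eq *.
rewrite /index_iota /= !big_cons big_nil /= mulr1 dft2E //.
rewrite !Yv_X // (_ : 6 %/ 2 = 3)%N // !big_ord_recr !big_ord0 /= !add0r !addnE !mulnE /=.
by rewrite /psiy2 /var6; ring.
Qed.

Lemma mpoly_int_rmorph_eq n (R : comNzRingType) (f g : {rmorphism {mpoly int[n]} -> R}) :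
  (forall i, f 'X_i = g 'X_i) -> f =1 g.
Proof.
move=> fgX p; rewrite (mpolyE p) !rmorph_sum; apply: eq_bigr => m _.
rewrite -mul_mpolyC !rmorphM; congr (_ * _).
  by rewrite -[p@_m]intz rmorph_int !rmorph_int.
by rewrite mpolyXE_id !rmorph_prod; apply: eq_bigr => i _; rewrite !rmorphXn fgX.
Qed.

Lemma map_mpoly_inj n (R S : nzRingType) (f : {rmorphism R -> S}) :
  injective f -> injective (map_mpoly (n := n) f).
Proof.
by move=> f_inj p q fpq; apply/mpolyP => m; apply: f_inj; rewrite -!mcoeff_map_mpoly fpq.
Qed.

Lemma map_mesym n k (R S : comNzRingType) (f : {rmorphism R -> S}) :
  map_mpoly f (mesym n R k) = mesym n S k.
Proof. by rewrite !mesymE raddf_sum; apply: eq_bigr => h _; rewrite /= map_mpolyX. Qed.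

Lemma msym_map_mpoly n (R S : nzRingType) (f : {rmorphism R -> S}) (s : 'S_n) p :
  msym s (map_mpoly f p) = map_mpoly f (msym s p).
Proof. by apply/mpolyP => m; rewrite mcoeff_sym !mcoeff_map_mpoly mcoeff_sym. Qed.

Section ThetaEval.
Variable n : nat.
Local Notation esyms R := [tuple mesym n R i.+1 | i < n].

(* [is_theta] determines t only through its image over algC; as int embeds in algC the
   identity descends to int, from where it maps to fields of positive characteristic. *)
Lemma is_theta_int m t (P : {mpoly int[n]}) :
  PsiY n m = map_mpoly intr P -> is_theta n m t ->
  t \mPo esyms int = \prod_(Q <- undup [seq msym s P | s : 'S_n]) Q.
Proof.
move=> PsiYP t_theta; have intr_inj : injective (intr : int -> algC) := intr_inj.
apply: (map_mpoly_inj intr_inj); rewrite map_mpoly_comp //.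
have -> : [tuple of [seq map_mpoly intr q | q <- esyms int]] = esyms algC.
  by apply: eq_from_tnth => i; rewrite tnth_map !tnth_mktuple map_mesym.
rewrite [LHS]t_theta /Theta PsiYP rmorph_prod /=.
have -> : [seq msym s (map_mpoly intr P) | s : 'S_n] =
          map (map_mpoly (intr : int -> algC)) [seq msym s P | s : 'S_n].
  by rewrite -map_comp; apply: eq_map => s /=; rewrite msym_map_mpoly.
by rewrite undup_map_inj ?big_map //; apply: map_mpoly_inj.
Qed.

Lemma evalZ_theta_eq0 (F : fieldType) (L : fieldExtType F) m t P
    (w : 'I_n -> L) (v : 'I_n -> F) :
  PsiY n m = map_mpoly intr P -> is_theta n m t ->
  (forall i : 'I_n, (mesym n L i.+1).@[w] = (v i)%:A) ->
  (map_mpoly intr P).@[w] = 0 -> evalZ t v = 0.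
Proof.
move=> PsiYP t_theta esym_w Pw0.
pose evalF := GRing.RMorphism.clone _ _
  (in_alg L \o meval v \o map_mpoly (intr : int -> F)) _.
pose evalL := GRing.RMorphism.clone _ _
  (meval w \o map_mpoly (intr : int -> L) \o comp_mpoly (esyms int)) _.
have evalFL : evalF =1 evalL.
  apply: mpoly_int_rmorph_eq => i /=.
  by rewrite !map_mpolyX !mevalXU comp_mpolyXU -tnth_nth tnth_mktuple map_mesym esym_w.
apply/eqP; rewrite -(fmorph_eq0 (in_alg L)); apply/eqP.
have /= -> := evalFL t; rewrite (is_theta_int PsiYP t_theta) !rmorph_prod /=.
rewrite (big_rem P) /= ?Pw0 ?mul0r // mem_undup; apply/mapP.
by exists 1%g; rewrite ?mem_enum ?msym1m.
Qed.

End ThetaEval.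

Lemma meval_mesymN n k (R : comNzRingType) (w : 'I_n -> R) :
  (mesym n R k).@[fun i => - w i] = (-1) ^+ k * (mesym n R k).@[w].
Proof.
rewrite !mesymE !raddf_sum mulr_sumr /=; apply: eq_bigr => h /eqP card_h.
rewrite !mevalX -card_h -mdeg_mesym1 mdegE -prodrXr -big_split /=.
by apply: eq_bigr => i _; apply: exprNn.
Qed.

Lemma pchar_two_neq0 (R : idomainType) p : p \in [pchar R] -> p != 2%N -> (2 : R) != 0.
Proof.
move=> pR; apply: contra => /eqP two0.
have : 2%N \in [pchar R] by rewrite inE /= two0 eqxx.
by rewrite (pcharf_eq pR) inE eq_sym.
Qed.

Section Sextic.
Variables (F : finFieldType) (a : F).
Local Notation f := ('X^6 + 'X^5 + a%:P).
Local Notation v := (fun i : 'I_6 => [:: 1; 0; 0; 0; 0; a]`_i).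

Lemma size_sextic : size f = 7%N.
Proof.
rewrite -addrA size_polyDl ?size_polyXn // size_polyDl ?size_polyXn //.
by rewrite (leq_ltn_trans (size_polyC_leq1 a)).
Qed.

Lemma sextic_monic : f \is monic.
Proof.
rewrite monicE -addrA lead_coefDl ?lead_coefXn // size_polyXn size_polyDl ?size_polyXn //.
by rewrite (leq_ltn_trans (size_polyC_leq1 a)).
Qed.

Lemma coef_sextic (i : 'I_6) : f`_(5 - i) = v i.
Proof.
by case: i => [[|[|[|[|[|[|//]]]]]] ?]; rewrite subnE !coefD !coefXn coefC /= ?add0r ?addr0.
Qed.

Variables (L : fieldExtType F) (x : L).
Hypotheses (f_irr : irreducible_poly f) (fx0 : root (map_poly (in_alg L) f) x).

Local Notation w := (fun j : 'I_6 => - frobq j x).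

Lemma mesym_frobq_orbit (i : 'I_6) : (mesym 6 L i.+1).@[w] = (v i)%:A.
Proof.
have f_orbit := prod_frobq_orbit size_sextic f_irr fx0 sextic_monic.
have := mroots_coeff (frobq_orbit 6 x) (@Ordinal 7 i.+1 (ltn_ord i)).
rewrite -f_orbit coef_map /= subSS coef_sextic => ->.
rewrite meval_mesymN; congr (_ * _); apply: meval_eq => j.
by rewrite tnth_mktuple.
Qed.

Lemma sum_frobq_orbit : \sum_(i < 6) frobq i x = -1.
Proof.
have := mesym_frobq_orbit ord0; rewrite mesym1E rmorph_sum /=.
rewrite (eq_bigr _ (fun j _ => mevalXU _ j)) sumrN scale1r.
by move/(congr1 -%R); rewrite opprK.
Qed.

Lemma meval_var6 k : (k < 6)%N -> (var6 L k).@[w] = - frobq k x.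
Proof. by move=> lt_k6; rewrite mevalXU inordK. Qed.

Lemma meval_psiy2 : (map_mpoly intr (psiy2 (var6 int))).@[w] = - psiy2 (frobq^~ x).
Proof.
by rewrite (rmorph_psiy2 (fun k _ => map_var6 _ k)) (rmorph_psiy2 meval_var6) psiy2N.
Qed.

Lemma meval_psiy3 : (map_mpoly intr (psiy3 (var6 int))).@[w] = psiy3 (frobq^~ x).
Proof.
by rewrite (rmorph_psiy3 (fun k _ => map_var6 _ k)) (rmorph_psiy3 meval_var6) psiy3N.
Qed.

Lemma meval_psiy6 : (map_mpoly intr (psiy6 (var6 int))).@[w] = psiy6 (frobq^~ x).
Proof.
by rewrite (rmorph_psiy6 (fun k _ => map_var6 _ k)) (rmorph_psiy6 meval_var6) psiy6N.
Qed.

Lemma evalZ_theta_frobq m t P :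
  PsiY 6 m = map_mpoly intr P -> is_theta 6 m t -> evalZ t v != 0 ->
  (map_mpoly intr P).@[w] != 0.
Proof.
move=> PsiYP t_theta; apply: contra => /eqP Pw0; apply/eqP.
exact: evalZ_theta_eq0 PsiYP t_theta mesym_frobq_orbit Pw0.
Qed.

Lemma frobq_orbit_free : 2 != 0 :> L ->
  psiy2 (frobq^~ x) != 0 -> psiy3 (frobq^~ x) != 0 -> psiy6 (frobq^~ x) != 0 ->
  free (frobq_orbit 6 x).
Proof.
move=> two_nz psi2 psi3 psi6; apply/freeP => k; rewrite /frobq_orbit.
under eq_bigr do rewrite -tnth_nth tnth_mktuple.
move=> k_rel i; pose c j := (k (inord j))%:A : L.
have c_circ s : \sum_(j < 6) c j * frobq (j + s) x = 0.
  transitivity (frobq s (\sum_(j < 6) k j *: frobq j x)); last by rewrite k_rel rmorph0.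
  rewrite rmorph_sum; apply: eq_bigr => j _ /=.
  by rewrite frobqZ frobqD /c inord_val mulr_algl.
have x_per k' : frobq (k' + 6) x = frobq k' x.
  by rewrite addnC -frobqD (frobq_period size_sextic f_irr fx0).
have sum_nz : \sum_(j < 6) frobq j x != 0 by rewrite sum_frobq_orbit oppr_eq0 oner_eq0.
have := circulant6_eq0 two_nz x_per sum_nz psi2 psi3 psi6 c_circ (ltn_ord i).
by rewrite /c inord_val => /eqP; rewrite scaler_eq0 oner_eq0 orbF => /eqP.
Qed.

End Sextic.

Theorem theorem3p1 (F : finFieldType) (p : nat) (a : F)
  (hchar : p \in [pchar F]) (hp5 : (5 <= p)%N)
  (hirr : irreducible_poly ('X^6 + 'X^5 + a%:P))
  (t2 t3 t6 : {mpoly int[6]})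
  (ht2 : is_theta 6 2 t2) (ht3 : is_theta 6 3 t3) (ht6 : is_theta 6 6 t6)
  (hne : let v := fun i : 'I_6 => [:: 1; 0; 0; 0; 0; a]`_i in
         evalZ t2 v * evalZ t3 v * evalZ t6 v != 0) :
  normal_poly ('X^6 + 'X^5 + a%:P).
Proof.
move: hne; rewrite /= !mulf_eq0 !negb_or => /andP[/andP[t2_nz t3_nz] t6_nz].
split; [exact: sextic_monic | exact: hirr | move=> L rs f_rs].
have size_rs : size rs = 6%N.
  have := congr1 (fun g : {poly L} => size g) f_rs.
  by rewrite /= size_map_poly size_sextic size_prod_XsubC => -[].
have fx0 : root (map_poly (in_alg L) ('X^6 + 'X^5 + a%:P)) rs`_0.
  by rewrite f_rs root_prod_XsubC mem_nth // size_rs.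
have rs_orbit : perm_eq rs (frobq_orbit 6 rs`_0).
  apply: prod_XsubC_eq; rewrite -f_rs.
  exact: prod_frobq_orbit (size_sextic a) hirr fx0 (sextic_monic a).
rewrite (perm_free rs_orbit); apply: (frobq_orbit_free hirr fx0).
- apply: (pchar_two_neq0 (p := p)); first by rewrite (pchar_lalg L).
  by apply: contraTneq hp5 => ->.
- by move: (evalZ_theta_frobq hirr fx0 PsiY_6_2 ht2 t2_nz); rewrite meval_psiy2 oppr_eq0.
- by move: (evalZ_theta_frobq hirr fx0 PsiY_6_3 ht3 t3_nz); rewrite meval_psiy3.
- by move: (evalZ_theta_frobq hirr fx0 PsiY_6_6 ht6 t6_nz); rewrite meval_psiy6.
Qed.
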